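(* Let $G$ be an odd unicyclic graph on $n$ vertices $1,2,\ldots,n$ and edges $e_1,\ldots,e_n$, with cycle $C$ and incidence matrix $M$. Then $M$ is invertible and $M^{-1}=[a_{i,j}]$ is given by $$a_{i,j}=\begin{cases}\frac{(-1)^{d(e_i,j)}}{2} & \text{if } e_i\in C,\\ 0 & \text{if } e_i\notin C \text{ and } j\in G\setminus e_i[C],\\ (-1)^{d(e_i,j)} & \text{if } e_i\notin C\text{ and } j\notin G\setminus e_i[C].\end{cases}$$
   Context: A unicyclic graph on $n$ vertices is a simple connected graph with $n$ edges; it is odd if its unique cycle $C$ has odd length. The incidence matrix $M$ is the $n\times n$ matrix with $(i,j)$-entry $1$ if vertex $i$ is incident with edge $e_j$ and $0$ otherwise. For a vertex $j$ and edge $e_i=\{l_i,m_i\}$, $d(j,e_i)=d(e_i,j):=\min\{d(j,l_i),d(j,m_i)\}$ where $d$ is graph distance. For an edge $e$ not on $C$, $G\setminus e$ has two components; $G\setminus e[C]$ is the one containing $C$. *)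

From mathcomp Require Import all_boot all_order all_algebra.
Set Implicit Arguments. Unset Strict Implicit. Unset Printing Implicit Defensive.
Import GRing.Theory Num.Theory.

(* A graph on vertex set 'I_n with n edges e_0..e_{n-1}; edge e_i = {l i, m i}. *)
Section Graph.
Variables (n : nat) (l m : 'I_n -> 'I_n).

Definition joins (i : 'I_n) (u v : 'I_n) : bool :=
  ((l i == u) && (m i == v)) || ((l i == v) && (m i == u)).

Definition simple_edges : Prop :=
  (forall i, l i != m i) /\
  (forall i k, joins i (l k) (m k) -> i = k).

Definition adj : rel 'I_n := fun u v => [exists i, joins i u v].

Definition adj_wo (i : 'I_n) : rel 'I_n :=
  fun u v => [exists k, (k != i) && joins k u v].

Definition connected_graph : Prop := forall u v, connect adj u v.

(* unicyclic: simple connected with n vertices and n edges *)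
Definition unicyclic : Prop := simple_edges /\ connected_graph.

Definition reach (k : nat) (u v : 'I_n) : bool :=
  [exists p : k.-tuple 'I_n, path adj u p && (last u p == v)].

(* graph distance (for a connected graph, the least k with a u-v walk of
   length k; it is always < n) *)
Definition gdist (u v : 'I_n) : nat := find (fun k => reach k u v) (iota 0 n).

Definition edist (i j : 'I_n) : nat := minn (gdist j (l i)) (gdist j (m i)).

Definition is_cycle (C : {set 'I_n}) : Prop :=
  exists s : seq 'I_n,
    [/\ 3 <= size s, uniq s, cycle adj s &
        forall i, (i \in C) =
          [&& l i \in s, m i \in s & (next s (l i) == m i) || (next s (m i) == l i)]].

(* j lies in G \ e_i [C], the component of G \ e_i containing C *)
Definition in_comp_C (C : {set 'I_n}) (i j : 'I_n) : bool :=
  [exists k in C, connect (adj_wo i) j (l k)].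

Definition incidence (R : nzRingType) : 'M[R]_n :=
  \matrix_(v, e) (if (v == l e) || (v == m e) then 1 else 0)%R.

Definition claimed_inv (R : fieldType) (C : {set 'I_n}) : 'M[R]_n :=
  \matrix_(i, j)
    (if i \in C then ((-1) ^+ edist i j / 2%:R)%R
     else if in_comp_C C i j then 0%R
     else (-1) ^+ edist i j)%R.

End Graph.

From Pilot Require Import Defs.
From mathcomp Require Import all_boot all_order all_algebra.
From mathcomp Require Import zify.
Import GRing.Theory Num.Theory.
Set Implicit Arguments. Unset Strict Implicit. Unset Printing Implicit Defensive.

(* Entry (i, e) of [claimed_inv * M] is a_{i,x} + a_{i,y} where e = xy, so the
   theorem reduces to two facts: an edge e_i off C separates its endpoints in
   G \ e_i, and the endpoints of any other edge e lie at distances of different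
   parities from e_i (unless e_i is off C and e lies in the component of C).
   Both follow from the cycle space over F_2, the left kernel of the
   edge-vertex boundary matrix: since G is connected that matrix has rank at
   least n - 1, so the cycle space is {0, C}, and C has odd weight.  A path
   joining the endpoints of e_i in G \ e_i, or two equally long shortest paths
   from the endpoints of e to e_i closed up through e (and e_i), would give a
   third element of it. *)

Local Open Scope ring_scope.
Local Notation F2 := 'F_2.

Lemma F2_cases (x : F2) : x = 0 \/ x = 1.
Proof. by move: x => [[|[|k]] //= ?]; [left | right]; apply: val_inj. Qed.

Lemma F2_natr k : (k%:R : F2) = (odd k)%:R.
Proof. by rewrite -(Fp_nat_mod (isT : prime 2)) modn2. Qed.

Lemma addmx_pchar2 (R : nzSemiRingType) p q (A : 'M[R]_(p, q)) :
  2%N \in [pchar R] -> A + A = 0.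
Proof. by move=> R2; apply/matrixP => i j; rewrite !mxE addrr_pchar2. Qed.

Lemma pchar_F2 : 2%N \in [pchar F2]. Proof. exact: pchar_Fp. Qed.

Lemma kermx_rank1_F2 p q (A : 'M[F2]_(p, q)) (c w : 'rV_p) :
  (\rank (kermx A) <= 1)%N -> c *m A = 0 -> c != 0 -> w *m A = 0 ->
  w = 0 \/ w = c.
Proof.
move=> rk1 /sub_kermxP cA c_neq0 /sub_kermxP wA.
have kerA_c : (kermx A <= c)%MS.
  rewrite -(mxrank_leqif_sup cA).2 rank_rV c_neq0.
  by apply/eqP; move: (mxrankS cA); rewrite rank_rV c_neq0 /=; lia.
have /submxP[a ->] := submx_trans wA kerA_c.
rewrite (mx11_scalar a) mul_scalar_mx.
by case: (F2_cases (a 0 0)) => ->; [left; rewrite scale0r | right; rewrite scale1r].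
Qed.

Lemma eq_odd_leS a b : (a <= b.+1)%N -> (b <= a.+1)%N -> odd a = odd b -> a = b.
Proof.
move=> ab1 ba1; case: (ltngtP a b) => // [ab | ba];
  [have -> : b = a.+1 by lia | have -> : a = b.+1 by lia]; by move=> /=; case: odd.
Qed.

Lemma sum_signr_odd (R : nzRingType) a b :
  odd a != odd b -> (-1) ^+ a + (-1) ^+ b = 0 :> R.
Proof.
by rewrite -signr_odd -(signr_odd _ b); case: (odd a); case: (odd b);
  rewrite //= ?expr1 ?expr0 ?addrN ?addNr.
Qed.

Section Graph.
Variables (n : nat) (l m : 'I_n -> 'I_n).
Hypothesis simple : simple_edges l m.

Local Notation joins := (joins l m).
Local Notation adj := (adj l m).
Local Notation adj_wo := (adj_wo l m).

Lemma lm_neq k : l k != m k. Proof. exact: simple.1. Qed.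

Lemma joinsC k x y : joins k x y = joins k y x.
Proof. by rewrite /joins orbC. Qed.

Lemma joins_lm k : joins k (l k) (m k).
Proof. by rewrite /joins !eqxx. Qed.

Lemma joinsP k x y : joins k x y ->
  (l k = x /\ m k = y) \/ (l k = y /\ m k = x).
Proof. by case/orP => /andP[/eqP-> /eqP->]; [left | right]. Qed.

Lemma adj_lm k : adj (l k) (m k).
Proof. by apply/existsP; exists k; apply: joins_lm. Qed.

Lemma adj_sym : symmetric adj.
Proof. by move=> x y; apply/existsP/existsP => -[k]; exists k; rewrite joinsC. Qed.

Lemma adj_wo_sym i : symmetric (adj_wo i).
Proof. by move=> x y; apply/existsP/existsP => -[k]; exists k; rewrite joinsC. Qed.

Lemma adj_wo_lm i k : k != i -> adj_wo i (l k) (m k).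
Proof. by move=> ki; apply/existsP; exists k; rewrite ki joins_lm. Qed.

Lemma adj_woW i x y : adj_wo i x y -> adj x y.
Proof. by case/existsP => k /andP[_ xy]; apply/existsP; exists k. Qed.

Definition edge_of (x y : 'I_n) : 'I_n := odflt x [pick k | joins k x y].

Lemma edge_ofP x y : adj x y -> joins (edge_of x y) x y.
Proof. by rewrite /edge_of; case: pickP => [k | no_k] // /existsP[k]; rewrite no_k. Qed.

Lemma edge_of_joins k x y : joins k x y -> edge_of x y = k.
Proof.
move=> kxy; have /edge_ofP : adj x y by apply/existsP; exists k.
set e := edge_of x y => /joinsP[[ex ey] | [ey ex]]; apply/esym/simple.2;
  by rewrite ex ey // joinsC.
Qed.

Lemma joins_same k x x' y y' : joins k x x' -> joins k y y' ->
  (x = y /\ x' = y') \/ (x = y' /\ x' = y).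
Proof. by do 2!case/joinsP=> -[<- <-]; [left | right | right | left]. Qed.

Lemma edge_of_wo i x y : adj_wo i x y -> edge_of x y != i.
Proof. by case/existsP => k /andP[ki /edge_of_joins->]. Qed.

(** * Walks and distances *)

Hypothesis connected : connected_graph l m.

Local Notation reach := (reach l m).
Local Notation gdist := (gdist l m).
Local Notation edist := (edist l m).

Lemma reachP k u v : reflect
  (exists2 p : seq 'I_n, size p = k & path adj u p && (last u p == v))
  (reach k u v).
Proof.
apply: (iffP existsP) => [[p p_uv] | [p <- p_uv]]; first by exists p; rewrite ?size_tuple.
by exists (in_tuple p).
Qed.

Lemma reach_path u p : path adj u p -> reach (size p) u (last u p).
Proof. by move=> p_u; apply/reachP; exists p; rewrite ?p_u ?eqxx. Qed.

Lemma reach_rcons k u v w : reach k u v -> adj v w -> reach k.+1 u w.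
Proof.
move=> /reachP[p <- /andP[p_u /eqP p_v]] vw; apply/reachP; exists (rcons p w).
  by rewrite size_rcons.
by rewrite rcons_path p_u p_v vw last_rcons /=.
Qed.

Lemma reach_cons k u v w : adj u v -> reach k v w -> reach k.+1 u w.
Proof.
move=> uv /reachP[p <- /andP[p_v p_w]]; apply/reachP; exists (v :: p) => //=.
by rewrite uv p_v.
Qed.

Lemma gdist_min k u v : reach k u v -> (gdist u v <= k)%N.
Proof.
move=> kuv; rewrite /Defs.gdist; have [k_lt_n | ] := ltnP k n.
  rewrite leqNgt; apply/negP => /(before_find 0%N).
  by rewrite nth_iota // add0n kuv.
by apply: leq_trans; rewrite -[X in (_ <= X)%N](size_iota 0 n) find_size.
Qed.

Lemma gdistxx u : gdist u u = 0%N.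
Proof. by apply/eqP; rewrite -leqn0; exact: gdist_min (reach_path (p := [::]) _). Qed.

Lemma gdist_reach u v : reach (gdist u v) u v.
Proof.
have [p p_u ->] := connectP (connected u v).
have [q q_u uniq_q _] := shortenP p_u.
have size_q : (size q < n)%N.
  by have := max_card (mem (u :: q)); rewrite (card_uniqP uniq_q) card_ord.
have has_q : has (fun k => reach k u (last u q)) (iota 0 n).
  by apply/hasP; exists (size q); rewrite ?mem_iota ?reach_path.
have := nth_find 0%N has_q; rewrite nth_iota ?add0n //.
by rewrite -[X in (_ < X)%N](size_iota 0 n) -has_find.
Qed.

Lemma gdist_adj u v x : adj u v -> (gdist u x <= (gdist v x).+1)%N.
Proof. by move=> uv; apply/gdist_min/(reach_cons uv)/gdist_reach. Qed.

Lemma edist_adj i u v : adj u v -> (edist i u <= (edist i v).+1)%N.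
Proof.
move=> uv; rewrite /Defs.edist.
by have := gdist_adj (l i) uv; have := gdist_adj (m i) uv; lia.
Qed.

Lemma edist_l i : edist i (l i) = 0%N.
Proof. by rewrite /Defs.edist gdistxx min0n. Qed.

Lemma edist_m i : edist i (m i) = 0%N.
Proof. by rewrite /Defs.edist gdistxx minn0. Qed.

(* An edge of such a walk cannot be e_i: its first vertex, an endpoint of e_i,
   would be closer to [u] than [edist i u]. *)
Lemma path_wo_of_short i u p : forall w j, path adj w p -> reach j u w ->
  (j + size p <= edist i u)%N -> path (adj_wo i) w p.
Proof.
elim: p => [|y p IHp] w j //= /andP[wy p_y] j_uw short.
rewrite (IHp y j.+1) ?(reach_rcons j_uw) ?addSnnS // andbT.
apply/existsP; exists (edge_of w y); rewrite edge_ofP // andbT.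
apply: contraTneq short => ei; have := gdist_min j_uw; rewrite /Defs.edist.
by have := edge_ofP wy; rewrite ei => /joinsP[[-> _] | [_ ->]]; lia.
Qed.

Lemma edist_path_wo i u : exists x p,
  [/\ x = l i \/ x = m i, size p = edist i u, path (adj_wo i) u p & last u p = x].
Proof.
have [x x_i d_x] : exists2 x, x = l i \/ x = m i & gdist u x = edist i u.
  rewrite /Defs.edist; have [|] := leqP (gdist u (l i)) (gdist u (m i)).
    by exists (l i); [left | lia].
  by exists (m i); [right | lia].
have /reachP[p size_p /andP[p_u /eqP p_x]] := gdist_reach u x.
exists x, p; split; rewrite ?size_p //.
apply: (path_wo_of_short (j := 0)) p_u _ _; last by rewrite add0n size_p d_x.
exact: (reach_path (p := [::])).
Qed.

(** * The cycle space over F_2 *)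

Lemma sum_incident (R : nzSemiRingType) (f : 'I_n -> R) k :
  \sum_v f v * ((v == l k) || (v == m k))%:R = f (l k) + f (m k).
Proof.
rewrite (bigD1 (l k)) //= eqxx mulr1 (bigD1 (m k)) 1?eq_sym ?lm_neq //=.
rewrite eqxx orbT mulr1 big1 ?addr0 // => v /andP[/negbTE-> /negbTE->].
by rewrite mulr0.
Qed.

Lemma mulmx_incidence (R : nzRingType) (A : 'M[R]_n) i e :
  (A *m incidence l m R) i e = A i (l e) + A i (m e).
Proof.
rewrite mxE -sum_incident; apply: eq_bigr => v _.
by rewrite mxE; case: (_ || _); rewrite ?mulr1 ?mulr0.
Qed.

Definition boundary : 'M[F2]_n := \matrix_(k, v) ((v == l k) || (v == m k))%:R.

Lemma row_boundary k : row k boundary = delta_mx 0 (l k) + delta_mx 0 (m k).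
Proof.
apply/rowP => v; rewrite !mxE -natrD; congr _%:R.
by have [->|] := eqVneq v (l k); rewrite /= ?(negbTE (lm_neq k)) ?addn0.
Qed.

Lemma row_boundary_edge_of x y : adj x y ->
  row (edge_of x y) boundary = delta_mx 0 x + delta_mx 0 y.
Proof.
by move/edge_ofP/joinsP => [[ex ey] | [ey ex]]; rewrite row_boundary ex ey // addrC.
Qed.

Fixpoint walk_vec (u : 'I_n) (p : seq 'I_n) : 'rV[F2]_n :=
  if p is v :: p' then delta_mx 0 (edge_of u v) + walk_vec v p' else 0.

Lemma walk_vec_boundary u p : path adj u p ->
  walk_vec u p *m boundary = delta_mx 0 u + delta_mx 0 (last u p).
Proof.
elim: p u => [|v p IHp] u /=; first by move=> _; rewrite mul0mx addmx_pchar2 ?pchar_F2.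
case/andP => uv p_v; rewrite mulmxDl -rowE row_boundary_edge_of // IHp //.
by rewrite -addrA (addrA (delta_mx 0 v)) addmx_pchar2 ?pchar_F2 ?add0r.
Qed.

Lemma walk_vec_avoid k u p :
  path (fun x y => edge_of x y != k) u p -> walk_vec u p 0 k = 0.
Proof.
elim: p u => [|v p IHp] u /=; first by rewrite mxE.
by case/andP => uv p_v; rewrite !mxE IHp // eq_sym (negbTE uv) addr0.
Qed.

Definition weight (w : 'rV[F2]_n) : F2 := \sum_k w 0 k.

Lemma weight0 : weight 0 = 0.
Proof. by rewrite /weight big1 // => k _; rewrite mxE. Qed.

Lemma weightD w1 w2 : weight (w1 + w2) = weight w1 + weight w2.
Proof. by rewrite /weight -big_split; apply: eq_bigr => k _; rewrite mxE. Qed.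

Lemma weight_delta k : weight (delta_mx 0 k) = 1.
Proof.
rewrite /weight (bigD1 k) //= mxE !eqxx big1 ?addr0 // => j /negbTE jk.
by rewrite mxE jk andbF.
Qed.

Lemma weight_walk_vec u p : weight (walk_vec u p) = (size p)%:R.
Proof.
elim: p u => [|v p IHp] u /=; first exact: weight0.
by rewrite weightD weight_delta IHp mulrS.
Qed.

Lemma coboundary_const (r : 'rV[F2]_n) u v :
  r *m boundary^T = 0 -> r 0 u = r 0 v.
Proof.
move=> r0; have r_lm k : r 0 (l k) = r 0 (m k).
  move/rowP/(_ k): r0; rewrite !mxE.
  under eq_bigr do rewrite !mxE.
  by rewrite sum_incident => /eqP; rewrite addr_eq0 (oppr_pchar2 pchar_F2) => /eqP.
have [p p_u ->] := connectP (connected u v).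
elim: p u p_u => [|w p IHp] u //= /andP[/edge_ofP uw p_w].
rewrite -IHp //; move: uw; set e := edge_of u w.
by case/joinsP => -[<- <-]; rewrite r_lm.
Qed.

Lemma rank_cycle_space : (\rank (kermx boundary) <= 1)%N.
Proof.
have cokernel_le1 : (\rank (kermx boundary^T) <= 1)%N.
  have [n0 | n_gt0] := posnP n; first by have := rank_leq_row (kermx boundary^T); lia.
  have cokernel_const : (kermx boundary^T <= (const_mx 1 : 'rV[F2]_n))%MS.
    apply/row_subP => j; set r := row j _.
    have r0 : r *m boundary^T = 0 by rewrite -row_mul mulmx_ker row0.
    clearbody r.
    have -> : r = r 0 (Ordinal n_gt0) *: const_mx 1.
      by apply/rowP => v; rewrite !mxE mulr1 (coboundary_const _ (Ordinal n_gt0) r0).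
    exact: scalemx_sub.
  exact: leq_trans (mxrankS cokernel_const) (rank_leq_row _).
have := mxrank_ker boundary; have := mxrank_ker boundary^T.
by rewrite mxrank_tr; have := rank_leq_row boundary; lia.
Qed.

(* The edge vector of the walk running backwards along [P] to [l e], across
   [e], then along [Q]. *)
Definition walk_via e P Q : 'rV[F2]_n :=
  walk_vec (l e) P + walk_vec (m e) Q + delta_mx 0 e.

Lemma walk_via_boundary e P Q : path adj (l e) P -> path adj (m e) Q ->
  walk_via e P Q *m boundary = delta_mx 0 (last (l e) P) + delta_mx 0 (last (m e) Q).
Proof.
move=> P_e Q_e; rewrite !mulmxDl !walk_vec_boundary // -rowE row_boundary.
set a := delta_mx 0 (l e); set b := delta_mx 0 (last _ P).
set c := delta_mx 0 (m e); set d := delta_mx 0 (last _ Q).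
by rewrite (addrACA a b c d) (addrC _ (a + c)) addrA addmx_pchar2 ?pchar_F2 ?add0r.
Qed.

Lemma weight_walk_via e P Q : size P = size Q -> weight (walk_via e P Q) = 1.
Proof.
move=> PQ; rewrite !weightD !weight_walk_vec weight_delta PQ.
by rewrite addrr_pchar2 ?pchar_F2 ?add0r.
Qed.

Lemma walk_via_avoid k e P Q : e != k ->
  path (fun x y => edge_of x y != k) (l e) P ->
  path (fun x y => edge_of x y != k) (m e) Q -> walk_via e P Q 0 k = 0.
Proof.
by move=> ek P_k Q_k; rewrite !mxE !walk_vec_avoid // [k == e]eq_sym (negbTE ek) !add0r.
Qed.

(** * The odd cycle *)

Variables (C : {set 'I_n}) (s : seq 'I_n).
Hypotheses (s_size : (3 <= size s)%N) (s_uniq : uniq s) (s_cycle : cycle adj s).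
Hypothesis C_edges : forall i, (i \in C) =
  [&& l i \in s, m i \in s & (next s (l i) == m i) || (next s (m i) == l i)].
Hypothesis C_odd : odd #|C|.

Lemma next_next x : x \in s -> next s (next s x) != x.
Proof.
move=> xs; case: (rot_to xs) => i s' s_rot.
rewrite -!(next_rot i s_uniq) s_rot.
have : uniq (x :: s') by rewrite -s_rot rot_uniq.
have : (2 <= size s')%N by move: s_size; rewrite -(size_rot i) s_rot.
case: s' {s_rot} => [|y [|z q]] //= _ /andP[x_yzq /andP[y_zq _]].
rewrite eqxx (negbTE (memPn x_yzq y _)) ?mem_head // eqxx.
by apply: contraNneq x_yzq => ->; rewrite !inE eqxx orbT.
Qed.

Lemma adj_next x : x \in s -> adj x (next s x).
Proof. exact: next_cycle s_cycle. Qed.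

Lemma edge_of_next_in x : x \in s -> edge_of x (next s x) \in C.
Proof.
move=> xs; rewrite C_edges; set e := edge_of x _.
have /joinsP[[-> ->] | [-> ->]] := edge_ofP (adj_next xs);
  by rewrite xs mem_next xs eqxx ?orbT.
Qed.

Lemma edge_of_next_inj : {in s &, injective (fun x => edge_of x (next s x))}.
Proof.
move=> x y xs ys /= exy; have := edge_ofP (adj_next ys); rewrite -exy.
case/(joins_same (edge_ofP (adj_next xs))) => [[] // | [x_ny nx_y]].
by move: (next_next ys); rewrite -x_ny nx_y eqxx.
Qed.

Lemma perm_cycle_edges : perm_eq [seq edge_of x (next s x) | x <- s] (enum C).
Proof.
apply: uniq_perm; rewrite ?enum_uniq ?(map_inj_in_uniq edge_of_next_inj) //.
move=> e; rewrite mem_enum; apply/mapP/idP => [[x xs ->] | ]; first exact: edge_of_next_in.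
rewrite C_edges => /and3P[le_s me_s /orP[/eqP nl | /eqP nm]].
  by exists (l e) => //; apply/esym/edge_of_joins; rewrite nl joins_lm.
by exists (m e) => //; apply/esym/edge_of_joins; rewrite nm joinsC joins_lm.
Qed.

Lemma perm_next : perm_eq [seq next s x | x <- s] s.
Proof.
apply: uniq_perm; rewrite ?(map_inj_uniq (can_inj (prev_next s_uniq))) //.
move=> x; apply/mapP/idP => [[y ys ->] | xs]; first by rewrite mem_next.
by exists (prev s x); rewrite ?mem_prev ?next_prev.
Qed.

Definition cycle_vec : 'rV[F2]_n := \row_k (k \in C)%:R.

Lemma cycle_vec_entry k : cycle_vec 0 k = if k \in C then 1 else 0.
Proof. by rewrite mxE; case: (k \in C). Qed.

Lemma cycle_vec_sum :
  cycle_vec = \sum_(x <- s) delta_mx 0 (edge_of x (next s x)).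
Proof.
rewrite -(big_map (fun x => edge_of x (next s x)) xpredT (delta_mx 0)).
rewrite (perm_big _ perm_cycle_edges) big_enum /=; apply/rowP => k.
rewrite summxE cycle_vec_entry; case: ifPn => kC.
  rewrite (bigD1 k) //= mxE !eqxx big1 ?addr0 // => j /andP[_ jk].
  by rewrite mxE eq_sym (negbTE jk) andbF.
rewrite big1 // => j jC; rewrite mxE (_ : k == j = false) ?andbF //.
by apply: contraNF kC => /eqP->.
Qed.

Lemma cycle_vec_boundary : cycle_vec *m boundary = 0.
Proof.
rewrite cycle_vec_sum mulmx_suml.
under eq_big_seq => x xs do rewrite -rowE row_boundary_edge_of ?adj_next //.
rewrite big_split /= -(big_map (next s) xpredT (delta_mx 0)) (perm_big _ perm_next).
exact: addmx_pchar2 pchar_F2.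
Qed.

Lemma weight_cycle_vec : weight cycle_vec = 1.
Proof.
rewrite /weight; under eq_bigr do rewrite cycle_vec_entry.
by rewrite -big_mkcond sumr_const /= -[_ *+ _]/(#|C|%:R) F2_natr C_odd.
Qed.

Lemma cycle_space w : w *m boundary = 0 -> w = 0 \/ w = cycle_vec.
Proof.
apply: kermx_rank1_F2 rank_cycle_space cycle_vec_boundary _.
by apply: contra_eq_neq weight_cycle_vec => ->; rewrite weight0 eq_sym oner_eq0.
Qed.

Lemma C_nonempty : exists k, k \in C.
Proof.
have : (0 < #|C|)%N by move: C_odd; case: #|C|.
by case/card_gt0P => k kC; exists k.
Qed.

Lemma connect_wo_cycle i x y : i \notin C -> x \in s -> y \in s ->
  connect (adj_wo i) x y.
Proof.
move=> iC xs ys; have sym_wo := sym_connect_sym (adj_wo_sym i).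
have s_wo : cycle (adj_wo i) s.
  apply: (sub_in_cycle (P := mem s) (e := fun a b => next s a == b));
    last exact: cycle_next.
    move=> a b a_s _ /eqP<-; apply/existsP; exists (edge_of a (next s a)).
    rewrite edge_ofP ?adj_next // andbT.
    by apply: contraNneq iC => <-; apply: edge_of_next_in.
  exact/allP.
case: s s_wo xs ys => [|z p] //= z_p xs ys.
have z_conn v : v \in z :: p -> connect (adj_wo i) z v.
  by move=> vp; apply: (path_connect z_p); rewrite in_cons mem_rcons vp orbT.
by apply: connect_trans (z_conn y ys); rewrite sym_wo z_conn.
Qed.

Local Notation in_comp := (in_comp_C l m C).

Lemma in_comp_wo i x y : adj_wo i x y -> in_comp i x = in_comp i y.
Proof.
move=> xy; have yx : adj_wo i y x by rewrite adj_wo_sym.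
by apply/existsP/existsP => -[k /andP[kC conn]]; exists k;
  rewrite kC (connect_trans (connect1 _) conn).
Qed.

Lemma in_comp_l i k : k \in C -> in_comp i (l k).
Proof. by move=> kC; apply/existsP; exists k; rewrite kC connect0. Qed.

Lemma connect_wo_in_comp i x y : i \notin C -> in_comp i x -> in_comp i y ->
  connect (adj_wo i) x y.
Proof.
move=> iC /existsP[k /andP[kC xk]] /existsP[k' /andP[k'C yk']].
have l_in j : j \in C -> l j \in s by rewrite C_edges => /and3P[].
rewrite (sym_connect_sym (adj_wo_sym i)) in yk'.
exact: connect_trans xk (connect_trans (connect_wo_cycle iC (l_in _ kC) (l_in _ k'C)) yk').
Qed.

Lemma in_comp_all i :
  ~~ in_comp i (l i) -> ~~ in_comp i (m i) -> forall v, in_comp i v.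
Proof.
move=> li_out mi_out v; have [k kC] := C_nonempty.
have [p p_k ->] := connectP (connected (l k) v).
elim: p (l k) (in_comp_l i kC) p_k => [|w p IHp] u //= u_in /andP[uw p_w].
apply: IHp p_w; have [ei | /negbTE ei] := eqVneq (edge_of u w) i.
  move: (edge_ofP uw) u_in; rewrite ei => /joinsP[[<- _] | [_ <-]].
    by rewrite (negbTE li_out).
  by rewrite (negbTE mi_out).
rewrite -(in_comp_wo (i := i) (x := u)) //.
by apply/existsP; exists (edge_of u w); rewrite ei edge_ofP.
Qed.

Lemma path_out_comp i k u p :
  k \in C -> path (adj_wo i) u p -> ~~ in_comp i u ->
  path (fun x y => edge_of x y != k) u p.
Proof.
move=> kC; elim: p u => [|v p IHp] u //= /andP[uv p_v] u_out.
have v_out : ~~ in_comp i v by rewrite -(in_comp_wo uv).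
rewrite IHp // andbT; apply: contraNneq u_out => ek.
move: (edge_ofP (adj_woW uv)) v_out; rewrite ek.
by case/joinsP => -[<- _]; rewrite in_comp_l.
Qed.

Lemma edist_parity i e : e != i -> (i \in C) || ~~ in_comp i (l e) ->
  odd (edist i (l e)) != odd (edist i (m e)).
Proof.
move=> ei iC_or_out; apply/negP => /eqP same_odd.
have same_dist : edist i (l e) = edist i (m e).
  by apply: eq_odd_leS same_odd; apply: edist_adj; rewrite ?adj_lm // adj_sym adj_lm.
have [x [P [x_i size_P P_wo P_x]]] := edist_path_wo i (l e).
have [y [Q [y_i size_Q Q_wo Q_y]]] := edist_path_wo i (m e).
have PQ : size P = size Q by rewrite size_P size_Q same_dist.
have P_adj := sub_path (@adj_woW i) P_wo; have Q_adj := sub_path (@adj_woW i) Q_wo.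
have w_i : walk_via e P Q 0 i = 0.
  exact: walk_via_avoid ei (sub_path (@edge_of_wo i) P_wo) (sub_path (@edge_of_wo i) Q_wo).
have [xy | xy] := eqVneq x y.
- have w_C : walk_via e P Q = cycle_vec.
    have /cycle_space[w0 | //] : walk_via e P Q *m boundary = 0.
      by rewrite walk_via_boundary // P_x Q_y xy addmx_pchar2 ?pchar_F2.
    by move: (weight_walk_via e PQ); rewrite w0 weight0 => /eqP; rewrite eq_sym oner_eq0.
  have iC : i \notin C.
    by move: w_i; rewrite w_C cycle_vec_entry; case: (i \in C) => // /eqP; rewrite oner_eq0.
  rewrite (negbTE iC) /= in iC_or_out.
  have me_out : ~~ in_comp i (m e) by rewrite -(in_comp_wo (adj_wo_lm ei)).
  have [k kC] := C_nonempty.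
  have ek : e != k by apply: contraNneq iC_or_out => ->; apply: in_comp_l.
  move: (walk_via_avoid ek (path_out_comp kC P_wo iC_or_out)
                           (path_out_comp kC Q_wo me_out)).
  by rewrite w_C cycle_vec_entry kC => /eqP; rewrite oner_eq0.
- have w_C : walk_via e P Q + delta_mx 0 i = cycle_vec.
    have /cycle_space[w0 | //] : (walk_via e P Q + delta_mx 0 i) *m boundary = 0.
      rewrite mulmxDl walk_via_boundary // -rowE row_boundary P_x Q_y.
      move: xy; case: x_i => ->; case: y_i => ->; rewrite ?eqxx // => _.
        by rewrite addmx_pchar2 ?pchar_F2.
      by rewrite (addrC (delta_mx 0 (m i))) addmx_pchar2 ?pchar_F2.
    by move/rowP/(_ i): w0; rewrite mxE w_i !mxE !eqxx add0r => /eqP; rewrite oner_eq0.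
  move: weight_cycle_vec; rewrite -w_C weightD weight_walk_via // weight_delta.
  by rewrite addrr_pchar2 ?pchar_F2 // => /eqP; rewrite eq_sym oner_eq0.
Qed.

Lemma in_comp_bridge i : i \notin C -> in_comp i (l i) != in_comp i (m i).
Proof.
move=> iC; case li_in: (in_comp i (l i)); case mi_in: (in_comp i (m i)) => //=.
  have /connectP[p p_wo p_last] := connect_wo_in_comp iC li_in mi_in.
  set w := walk_vec (l i) p + delta_mx 0 i.
  have w_i : w 0 i = 1.
    by rewrite mxE walk_vec_avoid ?(sub_path (@edge_of_wo i) p_wo) // mxE !eqxx add0r.
  have w_bd : w *m boundary = 0.
    rewrite mulmxDl walk_vec_boundary ?(sub_path (@adj_woW i) p_wo) //.
    by rewrite -rowE row_boundary -p_last addmx_pchar2 ?pchar_F2.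
  move: w_i; case/cycle_space: w_bd => ->; rewrite ?cycle_vec_entry ?(negbTE iC) ?mxE;
    by move/eqP; rewrite eq_sym oner_eq0.
by move: (in_comp_all (negbT li_in) (negbT mi_in) (l i)); rewrite li_in.
Qed.

Lemma claimed_inv_mul (R : numFieldType) :
  claimed_inv l m R C *m incidence l m R = 1%:M.
Proof.
apply/matrixP => i e; rewrite mulmx_incidence !mxE.
have [-> | ei] := eqVneq e i.
  rewrite edist_l edist_m expr0 mulr1n; case: ifPn => [_ | iC].
    by rewrite -mulrDl -mulr2n divff // pnatr_eq0.
  move: (in_comp_bridge iC).
  by case: (in_comp i (l i)); case: (in_comp i (m i)); rewrite ?addr0 ?add0r.
have Se : in_comp i (l e) = in_comp i (m e) by apply/in_comp_wo/adj_wo_lm.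
rewrite mulr0n -Se; case: ifPn => iC.
  by rewrite -mulrDl sum_signr_odd ?mul0r // edist_parity ?iC.
case: ifPn => [_ | le_out]; first by rewrite addr0.
by rewrite sum_signr_odd // edist_parity ?le_out ?orbT.
Qed.

End Graph.

Unset Implicit Arguments.

Theorem mainTheorem5 (R : numFieldType) (n : nat) (l m : 'I_n -> 'I_n)
    (C : {set 'I_n}) :
  unicyclic l m -> is_cycle l m C -> odd #|C| ->
  incidence l m R \in unitmx /\
  invmx (incidence l m R) = claimed_inv l m R C.
Proof.
move=> [simple connected] [s [s_size s_uniq s_cycle C_edges]] C_odd.
have inv_mul := claimed_inv_mul simple connected s_size s_uniq s_cycle C_edges C_odd R.
have [_ M_unit] := mulmx1_unit inv_mul; split => //.
by rewrite -[invmx _]mul1mx -inv_mul -mulmxA mulmxV // mulmx1.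
Qed.
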